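(* Let $\Gamma$ be a finite simple graph and $\alpha\in[0,1/3)$. If $\mathcal C_1$ and $\mathcal C_2$ are two distinct $\alpha$-quasi-equivalence classes of $\Gamma$, then $\mathcal C_1\cap\mathcal C_2=\emptyset$.
   Context: For a vertex $v$ of a simple graph $\Gamma$, $\mathcal N_\Gamma(v)$ is the set of vertices adjacent to $v$; $A\Delta B=(A\cup B)\setminus(A\cap B)$. For $\alpha\in[0,1/3)$, a set $\mathcal C$ of vertices of $\Gamma$ is an $\alpha$-quasi-equivalence class of $\Gamma$ if (1) $|(\mathcal N_\Gamma(v)\cup\{v\})\Delta\mathcal C|\le\alpha|\mathcal C|$ for every $v\in\mathcal C$, and (2) $|\mathcal N_\Gamma(v)\cap\mathcal C|<(1-3\alpha)|\mathcal C|$ for every vertex $v\notin\mathcal C$. *)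

From HB Require Import structures.
From mathcomp Require Import all_boot all_order all_algebra.
Set Implicit Arguments. Unset Strict Implicit. Unset Printing Implicit Defensive.
Import Order.TTheory GRing.Theory Num.Theory.
Local Open Scope ring_scope.

Definition simple_graph (T : finType) (e : rel T) : Prop :=
  symmetric e /\ irreflexive e.

Definition nbhd (T : finType) (e : rel T) (v : T) : {set T} := [set w | e v w].

Definition symdiff (T : finType) (A B : {set T}) : {set T} :=
  (A :|: B) :\: (A :&: B).

Definition quasi_equiv_class (R : realFieldType) (T : finType) (e : rel T)
    (alpha : R) (C : {set T}) : Prop :=
  (forall v, v \in C ->
     (#|symdiff (v |: nbhd e v) C|%:R <= alpha * #|C|%:R)) /\
  (forall v, v \notin C ->
     (#|nbhd e v :&: C|%:R < (1 - 3 * alpha) * #|C|%:R)).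

From HB Require Import structures.
From mathcomp Require Import all_boot all_order all_algebra.
From mathcomp Require Import lra.
Set Implicit Arguments. Unset Strict Implicit.
Import Order.TTheory GRing.Theory Num.Theory.
Local Open Scope ring_scope.

(* If v lies in both classes, the closed neighbourhood of v is alpha-close to
   each of them, so |C1 Δ C2| <= alpha (|C1| + |C2|).  A vertex w of the smaller
   class outside the larger one would see at least |C1| - |C1 \ C2| - alpha |C2|
   vertices of the larger class, too many for condition (2); hence the smaller
   class is contained in the larger one.  A proper inclusion is excluded the
   same way, using a vertex of the larger class outside the smaller one, now
   because alpha < 1/3. *)

Lemma leq_card_setD_trans (T : finType) (A B C : {set T}) :
  (#|A :\: C| <= #|A :\: B| + #|B :\: C|)%N.
Proof.
apply: leq_trans (leq_card_setU _ _); apply: subset_leq_card.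
by apply/subsetP => x; rewrite !inE; case: (x \in A) (x \in B) (x \in C) => [] [] [].
Qed.

Lemma card_symdiff (T : finType) (A B : {set T}) :
  #|symdiff A B| = (#|A :\: B| + #|B :\: A|)%N.
Proof.
have -> : symdiff A B = (A :\: B) :|: (B :\: A).
  by apply/setP => x; rewrite !inE; case: (x \in A) (x \in B) => [] [].
rewrite cardsU; have -> : (A :\: B) :&: (B :\: A) = set0.
  by apply/setP => x; rewrite !inE; case: (x \in A) (x \in B) => [] [].
by rewrite cards0 subn0.
Qed.

Lemma symdiffC (T : finType) (A B : {set T}) : symdiff A B = symdiff B A.
Proof. by rewrite /symdiff setUC setIC. Qed.

Lemma leq_card_symdiff_trans (T : finType) (A B C : {set T}) :
  (#|symdiff A C| <= #|symdiff A B| + #|symdiff B C|)%N.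
Proof.
rewrite !card_symdiff addnACA [(#|B :\: A| + _)%N]addnC.
by apply: leq_add; apply: leq_card_setD_trans.
Qed.

Section QuasiEquivalenceClasses.

Variables (R : realFieldType) (T : finType) (e : rel T) (alpha : R).
Hypotheses (alpha_ge0 : 0 <= alpha) (alpha_lt_third : alpha < 1 / 3).

Let qec := quasi_equiv_class e alpha.

Lemma quasi_equiv_card_symdiff (X Y : {set T}) v :
  qec X -> qec Y -> v \in X -> v \in Y ->
  #|X :\: Y|%:R + #|Y :\: X|%:R <= alpha * (#|X|%:R + #|Y|%:R).
Proof.
move=> [closeX _] [closeY _] vX vY.
have := closeY v vY; have := closeX v vX; rewrite symdiffC.
have := leq_card_symdiff_trans X (v |: nbhd e v) Y; rewrite card_symdiff.
by rewrite -(ler_nat R) !natrD => ? ? ?; lra.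
Qed.

Lemma quasi_equiv_card_outside (X Y : {set T}) w :
  qec X -> qec Y -> w \in Y -> w \notin X ->
  3 * alpha * #|X|%:R < #|X :\: Y|%:R + alpha * #|Y|%:R.
Proof.
move=> [_ sparseX] [closeY _] wY wX.
set N := w |: nbhd e w.
have nbhdX : nbhd e w :&: X = X :&: N.
  apply/setP => x; rewrite !inE andbC.
  by case: eqP => [->|_] //; rewrite (negbTE wX).
have coverX : (#|X| <= #|X :&: N| + #|X :\: Y| + #|symdiff N Y|)%N.
  rewrite -(cardsID N X) -addnA leq_add2l card_symdiff.
  by apply: leq_trans (leq_card_setD_trans X Y N) _; rewrite leq_add2l leq_addl.
have := sparseX w wX; have := closeY w wY; rewrite nbhdX.
by move: coverX; rewrite -(ler_nat R) !natrD => ? ? ?; lra.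
Qed.

Lemma quasi_equiv_subset (X Y : {set T}) v :
  qec X -> qec Y -> v \in X -> v \in Y -> (#|Y| <= #|X|)%N -> Y \subset X.
Proof.
move=> QX QY vX vY; rewrite -(ler_nat R) => leYX.
apply/subsetP => w wY; apply/negPn/negP => wX.
have := quasi_equiv_card_outside QX QY wY wX.
have := quasi_equiv_card_symdiff QX QY vX vY.
have : 0 <= #|Y :\: X|%:R :> R by [].
have := ler_wpM2l alpha_ge0 leYX.
move=> ? ? ? ?; lra.
Qed.

Lemma quasi_equiv_not_proper (X Y : {set T}) v :
  qec X -> qec Y -> v \in Y -> ~~ (Y \proper X).
Proof.
move=> QX QY vY; apply/negP => /properP [subYX [w wX wY]].
have vX := subsetP subYX v vY.
have cardX : #|X|%:R = #|X :\: Y|%:R + #|Y|%:R :> R.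
  by rewrite -natrD -(cardsID Y X) (setIidPr subYX) addnC.
have noY : #|Y :\: X| = 0%N by apply/eqP; rewrite cards_eq0 setD_eq0.
have := quasi_equiv_card_outside QY QX wX wY.
have := quasi_equiv_card_symdiff QX QY vX vY.
rewrite noY cardX.
have : 0 <= (1 - 2 * alpha) * #|X :\: Y|%:R.
  by apply: mulr_ge0 => //; move: alpha_lt_third; lra.
move=> ? ? ?; lra.
Qed.

End QuasiEquivalenceClasses.

Theorem proposition5p1 (R : realFieldType) (T : finType) (e : rel T)
    (alpha : R) (C1 C2 : {set T}) :
  simple_graph e ->
  0 <= alpha -> alpha < 1 / 3 ->
  quasi_equiv_class e alpha C1 -> quasi_equiv_class e alpha C2 ->
  C1 != C2 ->
  C1 :&: C2 = set0.
Proof.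
move=> _ alpha_ge0 alpha_lt Q1 Q2 neq12.
apply/eqP/negPn/negP => /set0Pn [v]; rewrite inE => /andP [v1 v2].
wlog le21 : C1 C2 Q1 Q2 neq12 v1 v2 / (#|C2| <= #|C1|)%N.
  move=> W; case: (leqP #|C2| #|C1|) => [|/ltnW]; first exact: W.
  by apply: W; rewrite // eq_sym.
have sub21 := quasi_equiv_subset alpha_ge0 Q1 Q2 v1 v2 le21.
have := quasi_equiv_not_proper alpha_lt Q1 Q2 v2.
by rewrite properEneq sub21 eq_sym neq12.
Qed.
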